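(* Run the generalized SMO algorithm with $\tau=0$ from some $\theta^0\in\mathcal F$ and suppose it never stops, i.e. $\Delta^k>0$ for all $k$. Then there are infinitely many iterations $k$ at which the update is not clipped.
   Context: Setup. Let $n,p,k_1,k_2\ge1$, $X\in\mathbb{R}^{n\times p}$ with rows $X_{i:}$, $y\in\mathbb{R}^n$, $C>0$, $\nu\in(0,1]$, $A\in\mathbb{R}^{k_1\times p}$, $b\in\mathbb{R}^{k_1}$, $\Gamma\in\mathbb{R}^{k_2\times p}$, $d\in\mathbb{R}^{k_2}$; $\mathbf e$ is the all-ones vector and $Q=XX^T\in\mathbb{R}^{n\times n}$. Dual variables are $\theta=(\alpha,\alpha^*,\gamma,\mu)\in\mathbb{R}^n\times\mathbb{R}^n\times\mathbb{R}^{k_1}\times\mathbb{R}^{k_2}$. Let $M$ be the $(2n+k_1+k_2)\times p$ matrix with row blocks $X,-X,A,-\Gamma$, $\bar Q=MM^T$, $l=(y,-y,b,-d)$, and $f(\theta)=\frac12\theta^T\bar Q\theta+l^T\theta$. The feasible set $\mathcal F$ consists of $\theta$ with $0\le\alpha_i,\alpha_i^*\le C/n$ for all $i$, $\mathbf e^T(\alpha+\alpha^* )\le C\nu$, $\mathbf e^T(\alpha-\alpha^* )=0$, $\gamma_j\ge0$ for all $j$. Generalized SMO algorithm. Assume the rows of $X$ are pairwise distinct and no row of $A$ or $\Gamma$ is zero. Let $I_{up}(\alpha)=\{i:\alpha_i<C/n\}$, $I_{low}(\alpha)=\{i:\alpha_i>0\}$, and $I^*_{up},I^*_{low}$ the same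 sets for $\alpha^*$. Fix $\tau\ge0$ and $\theta^0\in\mathcal F$. At iteration $k$, with all gradients evaluated at $\theta^k$: pick $i\in\arg\min_{I_{up}(\alpha^k)}\nabla_{\alpha_i}f$, $j\in\arg\max_{I_{low}(\alpha^k)}\nabla_{\alpha_j}f$ and set $\Delta_1=\max(\nabla_{\alpha_j}f-\nabla_{\alpha_i}f,0)$ ($\Delta_1=0$ if either set is empty); define $i^*,j^*,\Delta_2$ identically for $\alpha^*$; $\Delta_3=\max(-\min_{s}\nabla_{\gamma_s}f,0)$; $\Delta_4=\max_s|\nabla_{\mu_s}f|$; $\Delta^k=\max(\Delta_1,\Delta_2,\Delta_3,\Delta_4)$. If $\Delta^k\le\tau$ stop; otherwise update the first block (in the order $\alpha,\alpha^*,\gamma,\mu$) whose $\Delta_m$ equals $\Delta^k$, leaving all other coordinates unchanged: Block $\alpha$: $t_q=-\frac{\nabla_{\alpha_i}f-\nabla_{\alpha_j}f}{Q_{ii}+Q_{jj}-2Q_{ij}}$, $I_1=\max(-\alpha_i^k,\alpha_j^k-C/n)$, $I_2=\min(\alpha_j^k,C/n-\alpha_i^k)$, $t^*=\min(\max(I_1,t_q),I_2)$, $\alpha_i^{k+1}=\alpha_i^k+t^*$, $\alpha_j^{k+1}=\alpha_j^k-t^*$. Block $\alpha^*$: the same formulas with $\alpha^*$, $(i^*,j^* )$, $\nabla_{\alpha^*}f$ and the same matrix $Q$. Block $\gamma$: $u\in\arg\min_s\nabla_{\gamma_s}f$, $\gamma_u^{k+1}=\max\big(\gamma_u^k-\nabla_{\gamma_u}f/(AA^T)_{uu},0\big)$.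 Block $\mu$: $u\in\arg\max_s|\nabla_{\mu_s}f|$, $\mu_u^{k+1}=\mu_u^k-\nabla_{\mu_u}f/(\Gamma\Gamma^T)_{uu}$. Clipping. An update in block $\alpha$ or $\alpha^*$ is called clipped if $t^*\neq t_q$; an update in block $\gamma$ is clipped if $\gamma_u^k-\nabla_{\gamma_u}f(\theta^k)/(AA^T)_{uu}<0$; updates in block $\mu$ are never clipped. *)

From Stdlib Require Import Reals List Arith.
Open Scope R_scope.

(* Problem data of the generalized nu-SVR dual.  Vectors are functions
   nat -> R (only indices below the dimension are meaningful); matrices are
   functions nat -> nat -> R (row, column). *)
Record svm_data := Build_svm {
  n_ : nat; p_ : nat; k1_ : nat; k2_ : nat;
  X_ : nat -> nat -> R;   (* n x p *)
  y_ : nat -> R;          (* n *)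
  C_ : R; nu_ : R;
  A_ : nat -> nat -> R;   (* k1 x p *)
  b_ : nat -> R;          (* k1 *)
  G_ : nat -> nat -> R;   (* Gamma, k2 x p *)
  d_ : nat -> R           (* k2 *)
}.

Fixpoint fsum (m : nat) (f : nat -> R) : R :=
  match m with O => 0 | S m' => fsum m' f + f m' end.

Section Algo.
Variable D : svm_data.
Let n := n_ D. Let p := p_ D. Let k1 := k1_ D. Let k2 := k2_ D.
Let X := X_ D. Let y := y_ D. Let C := C_ D. Let nu := nu_ D.
Let A := A_ D. Let b := b_ D. Let G := G_ D. Let d := d_ D.

(* theta is the concatenated vector (alpha, alpha*, gamma, mu) of length
   N = 2n + k1 + k2 : alpha_i = theta i, alpha*_i = theta (n+i),
   gamma_s = theta (2n+s), mu_s = theta (2n+k1+s). *)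
Definition Ndim : nat := (2 * n + k1 + k2)%nat.
Definition oA : nat := 0%nat.
Definition oAs : nat := n.
Definition oG : nat := (2 * n)%nat.
Definition oM : nat := (2 * n + k1)%nat.

Definition Mmat (r c : nat) : R :=
  if Nat.ltb r n then X r c
  else if Nat.ltb r (2 * n) then - X (r - n)%nat c
  else if Nat.ltb r (2 * n + k1) then A (r - 2 * n)%nat c
  else - G (r - (2 * n + k1))%nat c.

Definition lvec (r : nat) : R :=
  if Nat.ltb r n then y r
  else if Nat.ltb r (2 * n) then - y (r - n)%nat
  else if Nat.ltb r (2 * n + k1) then b (r - 2 * n)%nat
  else - d (r - (2 * n + k1))%nat.

Definition Qbar (r r' : nat) : R := fsum p (fun c => Mmat r c * Mmat r' c).

Definition fobj (theta : nat -> R) : R :=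
  / 2 * fsum Ndim (fun r => theta r * fsum Ndim (fun r' => Qbar r r' * theta r'))
  + fsum Ndim (fun r => lvec r * theta r).

(* its gradient (Qbar is symmetric): grad f(theta) = Qbar theta + l *)
Definition grad (theta : nat -> R) (r : nat) : R :=
  fsum Ndim (fun r' => Qbar r r' * theta r') + lvec r.

Definition Qm (i j : nat) : R := fsum p (fun c => X i c * X j c).
Definition AAt (u v : nat) : R := fsum p (fun c => A u c * A v c).
Definition GGt (u v : nat) : R := fsum p (fun c => G u c * G v c).

Definition feasible (theta : nat -> R) : Prop :=
  (forall i, (i < n)%nat ->
     0 <= theta (oA + i)%nat <= C / INR n /\
     0 <= theta (oAs + i)%nat <= C / INR n) /\
  fsum n (fun i => theta (oA + i)%nat + theta (oAs + i)%nat) <= C * nu /\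
  fsum n (fun i => theta (oA + i)%nat - theta (oAs + i)%nat) = 0 /\
  (forall s, (s < k1)%nat -> 0 <= theta (oG + s)%nat).

Definition lmin (l : list R) : option R :=
  fold_right (fun x acc => match acc with None => Some x | Some m => Some (Rmin x m) end) None l.
Definition lmax (l : list R) : option R :=
  fold_right (fun x acc => match acc with None => Some x | Some m => Some (Rmax x m) end) None l.

Definition Rltb (a c : R) : bool := if Rlt_dec a c then true else false.

Definition Iup (theta : nat -> R) (o : nat) : list nat :=
  filter (fun i => Rltb (theta (o + i)%nat) (C / INR n)) (seq 0 n).
Definition Ilow (theta : nat -> R) (o : nat) : list nat :=
  filter (fun i => Rltb 0 (theta (o + i)%nat)) (seq 0 n).

Definition DeltaPair (theta : nat -> R) (o : nat) : R :=
  match lmin (map (fun i => grad theta (o + i)%nat) (Iup theta o)),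
        lmax (map (fun j => grad theta (o + j)%nat) (Ilow theta o)) with
  | Some gi, Some gj => Rmax (gj - gi) 0
  | _, _ => 0
  end.

Definition Delta1 (theta : nat -> R) : R := DeltaPair theta oA.
Definition Delta2 (theta : nat -> R) : R := DeltaPair theta oAs.
Definition Delta3 (theta : nat -> R) : R :=
  match lmin (map (fun s => grad theta (oG + s)%nat) (seq 0 k1)) with
  | Some m => Rmax (- m) 0 | None => 0 end.
Definition Delta4 (theta : nat -> R) : R :=
  match lmax (map (fun s => Rabs (grad theta (oM + s)%nat)) (seq 0 k2)) with
  | Some m => m | None => 0 end.
Definition smoDelta (theta : nat -> R) : R :=
  Rmax (Rmax (Delta1 theta) (Delta2 theta)) (Rmax (Delta3 theta) (Delta4 theta)).

(* SMO update of a pair block (alpha if o = oA, alpha* if o = oAs);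
   cl records whether the update is clipped (t* <> t_q). *)
Definition pair_step (o : nat) (theta theta' : nat -> R) (cl : bool) : Prop :=
  exists i j : nat,
    In i (Iup theta o) /\
    (forall i', In i' (Iup theta o) -> grad theta (o + i)%nat <= grad theta (o + i')%nat) /\
    In j (Ilow theta o) /\
    (forall j', In j' (Ilow theta o) -> grad theta (o + j')%nat <= grad theta (o + j)%nat) /\
    let tq := - (grad theta (o + i)%nat - grad theta (o + j)%nat)
                / (Qm i i + Qm j j - 2 * Qm i j) in
    let I1 := Rmax (- theta (o + i)%nat) (theta (o + j)%nat - C / INR n) in
    let I2 := Rmin (theta (o + j)%nat) (C / INR n - theta (o + i)%nat) in
    let ts := Rmin (Rmax I1 tq) I2 in
    theta' (o + i)%nat = theta (o + i)%nat + ts /\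
    theta' (o + j)%nat = theta (o + j)%nat - ts /\
    (forall r, r <> (o + i)%nat -> r <> (o + j)%nat -> theta' r = theta r) /\
    (cl = true <-> ts <> tq).

Definition gamma_step (theta theta' : nat -> R) (cl : bool) : Prop :=
  exists u : nat,
    (u < k1)%nat /\
    (forall s, (s < k1)%nat -> grad theta (oG + u)%nat <= grad theta (oG + s)%nat) /\
    let v := theta (oG + u)%nat - grad theta (oG + u)%nat / AAt u u in
    theta' (oG + u)%nat = Rmax v 0 /\
    (forall r, r <> (oG + u)%nat -> theta' r = theta r) /\
    (cl = true <-> v < 0).

Definition mu_step (theta theta' : nat -> R) (cl : bool) : Prop :=
  exists u : nat,
    (u < k2)%nat /\
    (forall s, (s < k2)%nat -> Rabs (grad theta (oM + s)%nat) <= Rabs (grad theta (oM + u)%nat)) /\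
    theta' (oM + u)%nat = theta (oM + u)%nat - grad theta (oM + u)%nat / GGt u u /\
    (forall r, r <> (oM + u)%nat -> theta' r = theta r) /\
    cl = false.

(* Ties in the argmin/argmax are resolved arbitrarily. *)
Definition smo_step (theta theta' : nat -> R) (cl : bool) : Prop :=
  let De := smoDelta theta in
  (Delta1 theta = De /\ pair_step oA theta theta' cl) \/
  (Delta1 theta <> De /\ Delta2 theta = De /\ pair_step oAs theta theta' cl) \/
  (Delta1 theta <> De /\ Delta2 theta <> De /\ Delta3 theta = De /\
     gamma_step theta theta' cl) \/
  (Delta1 theta <> De /\ Delta2 theta <> De /\ Delta3 theta <> De /\
     mu_step theta theta' cl).

Definition data_ok : Prop :=
  (1 <= n)%nat /\ (1 <= p)%nat /\ (1 <= k1)%nat /\ (1 <= k2)%nat /\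
  0 < C /\ 0 < nu <= 1 /\
  (forall i j, (i < n)%nat -> (j < n)%nat -> i <> j ->
     exists c, (c < p)%nat /\ X i c <> X j c) /\
  (forall s, (s < k1)%nat -> exists c, (c < p)%nat /\ A s c <> 0) /\
  (forall s, (s < k2)%nat -> exists c, (c < p)%nat /\ G s c <> 0).

End Algo.

(* Along the run the iterates stay in the box 0 <= alpha, alpha* <= C/n,
   gamma >= 0.  There a clipped gamma update is impossible and mu updates are
   never clipped, so a clipped update is a pair update whose step
   t* = min(alpha_j, C/n - alpha_i) stops short of t_q > 0.  Such a step either
   puts one more coordinate of (alpha, alpha* ) on the boundary of the box, or it
   exchanges the values of alpha_i and alpha_j while strictly decreasing f.
   The number of boundary coordinates is at most 2n, so if every update from some
   point on were clipped, eventually every step would be an exchange; the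
   iterates would then range over the finitely many rearrangements of a single
   vector while f strictly decreases, which is impossible. *)

From Stdlib Require Import Reals List Arith Lia Lra FinFun Classical FunctionalExtensionality.
Open Scope R_scope.

Lemma fsum_ext m f g : (forall i, (i < m)%nat -> f i = g i) -> fsum m f = fsum m g.
Proof.
  induction m as [|m IH]; intros H; simpl; [reflexivity|].
  rewrite IH, H; auto; intros; apply H; lia.
Qed.

Lemma fsum_add m f g : fsum m (fun i => f i + g i) = fsum m f + fsum m g.
Proof. induction m as [|m IH]; simpl; [lra|]. rewrite IH; ring. Qed.

Lemma fsum_sub m f g : fsum m (fun i => f i - g i) = fsum m f - fsum m g.
Proof. induction m as [|m IH]; simpl; [lra|]. rewrite IH; ring. Qed.

Lemma fsum_scal_l m k f : fsum m (fun i => k * f i) = k * fsum m f.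
Proof. induction m as [|m IH]; simpl; [ring|]. rewrite IH; ring. Qed.

Lemma fsum_eq0 m f : (forall i, (i < m)%nat -> f i = 0) -> fsum m f = 0.
Proof.
  induction m as [|m IH]; intros H; simpl; [reflexivity|].
  rewrite IH, H; [ring | lia | intros; apply H; lia].
Qed.

Lemma fsum_comm m q (F : nat -> nat -> R) :
  fsum m (fun i => fsum q (fun j => F i j)) = fsum q (fun j => fsum m (fun i => F i j)).
Proof.
  induction m as [|m IH]; simpl.
  - symmetry; apply fsum_eq0; reflexivity.
  - rewrite IH, <- fsum_add; reflexivity.
Qed.

Lemma fsum_single m a f :
  (a < m)%nat -> (forall r, r <> a -> f r = 0) -> fsum m f = f a.
Proof.
  induction m as [|m IH]; intros Ha H; [lia|]. simpl.
  destruct (Nat.eq_dec m a) as [->|Hne].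
  - rewrite fsum_eq0; [ring|]. intros; apply H; lia.
  - rewrite IH, (H m); [ring | auto | lia | auto].
Qed.

Lemma fsum_update2 m a b f g :
  (a < m)%nat -> (b < m)%nat -> a <> b ->
  (forall r, r <> a -> r <> b -> g r = f r) ->
  fsum m g = fsum m f + (g a - f a) + (g b - f b).
Proof.
  intros Ha Hb Hab H.
  set (da := fun r => if Nat.eq_dec r a then g r - f r else 0).
  set (db := fun r => if Nat.eq_dec r b then g r - f r else 0).
  assert (Hsplit : fsum m g = fsum m f + fsum m da + fsum m db).
  { rewrite <- !fsum_add. apply fsum_ext; intros r _. unfold da, db.
    destruct (Nat.eq_dec r a), (Nat.eq_dec r b); subst; try lia; try ring.
    rewrite H by auto; ring. }
  rewrite Hsplit, (fsum_single m a da), (fsum_single m b db); auto.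
  - unfold da, db. destruct (Nat.eq_dec a a), (Nat.eq_dec b b); try congruence; ring.
  - intros r Hr; unfold db; destruct (Nat.eq_dec r b); congruence.
  - intros r Hr; unfold da; destruct (Nat.eq_dec r a); congruence.
Qed.

Lemma fsum_ge0 m f : (forall i, (i < m)%nat -> 0 <= f i) -> 0 <= fsum m f.
Proof.
  induction m as [|m IH]; intros H; simpl; [lra|].
  assert (0 <= f m) by (apply H; lia).
  assert (0 <= fsum m f) by (apply IH; intros; apply H; lia). lra.
Qed.

Lemma fsum_gt0 m f c :
  (forall i, (i < m)%nat -> 0 <= f i) -> (c < m)%nat -> 0 < f c -> 0 < fsum m f.
Proof.
  induction m as [|m IH]; intros H Hc Hf; simpl; [lia|].
  assert (0 <= f m) by (apply H; lia).
  destruct (Nat.eq_dec c m) as [->|Hne].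
  - assert (0 <= fsum m f) by (apply fsum_ge0; intros; apply H; lia). lra.
  - assert (0 < fsum m f) by (apply IH; [intros; apply H; lia | lia | auto]). lra.
Qed.

Fixpoint count_true (m : nat) (P : nat -> bool) : nat :=
  match m with O => O | S m' => (count_true m' P + Nat.b2n (P m'))%nat end.

Lemma count_true_le m P : (count_true m P <= m)%nat.
Proof. induction m as [|m IH]; simpl; [lia|]. destruct (P m); simpl; lia. Qed.

Lemma INR_count_true m P : INR (count_true m P) = fsum m (fun r => INR (Nat.b2n (P r))).
Proof. induction m as [|m IH]; simpl; [reflexivity|]. rewrite plus_INR, IH; reflexivity. Qed.

Lemma count_true_update2 m P P' a b :
  (a < m)%nat -> (b < m)%nat -> a <> b ->
  (forall r, r <> a -> r <> b -> P' r = P r) ->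
  (count_true m P' + Nat.b2n (P a) + Nat.b2n (P b)
   = count_true m P + Nat.b2n (P' a) + Nat.b2n (P' b))%nat.
Proof.
  intros Ha Hb Hab H. apply INR_eq. rewrite !plus_INR, !INR_count_true.
  rewrite (fsum_update2 m a b (fun r => INR (Nat.b2n (P r))) (fun r => INR (Nat.b2n (P' r))));
    auto; [ring|].
  intros r Hra Hrb; rewrite H; auto.
Qed.

Lemma lmin_In l m : lmin l = Some m -> In m l.
Proof.
  revert m; induction l as [|x l IH]; simpl; intros m H; [discriminate|].
  destruct (lmin l) eqn:E; inversion H; subst.
  - unfold Rmin; destruct (Rle_dec x r); [left | right]; auto.
  - left; reflexivity.
Qed.

Lemma lmax_In l m : lmax l = Some m -> In m l.
Proof.
  revert m; induction l as [|x l IH]; simpl; intros m H; [discriminate|].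
  destruct (lmax l) eqn:E; inversion H; subst.
  - unfold Rmax; destruct (Rle_dec x r); [right | left]; auto.
  - left; reflexivity.
Qed.

Lemma Rltb_true a c : Rltb a c = true -> a < c.
Proof. unfold Rltb; destruct (Rlt_dec a c); congruence. Qed.

Lemma decreasing_not_in_list (u : nat -> R) (L : list R) :
  (forall m, In (u m) L) -> ~ (forall m, u (S m) < u m).
Proof.
  intros Hin Hdec.
  assert (Hlt : forall m k, (m < k)%nat -> u k < u m).
  { intros m k Hmk; induction Hmk as [|k Hmk IH]; [apply Hdec|].
    specialize (Hdec k); lra. }
  assert (Hinj : Injective u).
  { intros x z E. destruct (lt_eq_lt_dec x z) as [[H|H]|H]; auto;
      specialize (Hlt _ _ H); lra. }
  assert (Hnodup : NoDup (map u (seq 0 (S (length L))))).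
  { apply Injective_map_NoDup; [exact Hinj | apply seq_NoDup]. }
  assert (Hincl : incl (map u (seq 0 (S (length L)))) L).
  { intros x Hx. apply in_map_iff in Hx. destruct Hx as [m [<- _]]. apply Hin. }
  pose proof (NoDup_incl_length Hnodup Hincl) as Hlen.
  rewrite length_map, length_seq in Hlen. lia.
Qed.

Fixpoint words (V : list R) (m : nat) : list (list R) :=
  match m with
  | O => nil :: nil
  | S m' => flat_map (fun v => map (cons v) (words V m')) V
  end.

Lemma In_words V l : incl l V -> In l (words V (length l)).
Proof.
  induction l as [|x l IH]; simpl; intros H; [left; reflexivity|].
  apply in_flat_map. exists x. split; [apply H; left; reflexivity|].
  apply in_map, IH. intros z Hz; apply H; right; exact Hz.
Qed.

Lemma bounded_nondecreasing_stabilizes (u : nat -> nat) (N K : nat) :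
  (forall k, (K <= k)%nat -> (u k <= u (S k))%nat) -> (forall k, (u k <= N)%nat) ->
  exists K', (K <= K')%nat /\ forall k, (K' <= k)%nat -> u (S k) = u k.
Proof.
  intros Hmono Hbnd.
  assert (Hmono' : forall k k', (K <= k)%nat -> (k <= k')%nat -> (u k <= u k')%nat).
  { intros k k' Hk Hkk'. induction Hkk' as [|k' Hkk' IH]; [lia|].
    specialize (Hmono k' ltac:(lia)). lia. }
  enough (Hgap : forall gap k0, (K <= k0)%nat -> (N - u k0 <= gap)%nat ->
            exists K', (k0 <= K')%nat /\ forall k, (K' <= k)%nat -> u (S k) = u k).
  { destruct (Hgap (N - u K)%nat K) as [K' [HK' Hst]]; eauto. }
  induction gap as [|gap IH]; intros k0 Hk0 Hgap.
  - exists k0; split; [lia|]. intros k Hk.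
    pose proof (Hmono' k0 k Hk0 Hk). pose proof (Hmono k ltac:(lia)). pose proof (Hbnd (S k)). lia.
  - destruct (classic (exists k, (k0 <= k)%nat /\ u k <> u (S k))) as [[k [Hk Hne]]|Hnone].
    + pose proof (Hmono' k0 k Hk0 Hk). pose proof (Hmono k ltac:(lia)).
      destruct (IH (S k)) as [K' [HK' Hst]]; [lia | lia |].
      exists K'; split; [lia | exact Hst].
    + exists k0; split; [lia|]. intros k Hk.
      apply NNPP; intros Hne; apply Hnone; exists k; split; [exact Hk | congruence].
Qed.

Definition swap_below (N : nat) (th th' : nat -> R) : Prop :=
  exists a b, (a < N)%nat /\ (b < N)%nat /\ a <> b /\ th' a = th b /\ th' b = th a /\
    forall r, r <> a -> r <> b -> th' r = th r.

Lemma swap_below_values (N : nat) (theta : nat -> nat -> R) :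
  (forall k, swap_below N (theta k) (theta (S k))) ->
  forall k, (forall r, (r < N)%nat -> In (theta k r) (map (theta O) (seq 0 N))) /\
            (forall r, ~ (r < N)%nat -> theta k r = theta O r).
Proof.
  intros Hswap k. induction k as [|k [IHin IHout]].
  - split; [intros r Hr; apply in_map, in_seq; lia | reflexivity].
  - destruct (Hswap k) as [a [b [Ha [Hb [_ [Ea [Eb Eo]]]]]]]. split.
    + intros r Hr.
      destruct (Nat.eq_dec r a) as [->|Hra]; [rewrite Ea; apply IHin; exact Hb|].
      destruct (Nat.eq_dec r b) as [->|Hrb]; [rewrite Eb; apply IHin; exact Ha|].
      rewrite Eo; auto.
    + intros r Hr. rewrite Eo by (intros ->; contradiction). auto.
Qed.

(* A sequence of swaps only visits the finitely many rearrangements of its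
   start, so no function can decrease strictly along it. *)
Lemma swaps_not_strictly_decreasing (N : nat) (F : (nat -> R) -> R) (theta : nat -> nat -> R) :
  (forall k, swap_below N (theta k) (theta (S k))) ->
  ~ (forall k, F (theta (S k)) < F (theta k)).
Proof.
  intros Hswap.
  set (V := map (theta O) (seq 0 N)).
  set (extend := fun (l : list R) r => if r <? N then nth r l 0 else theta O r).
  apply (decreasing_not_in_list (fun k => F (theta k)) (map (fun l => F (extend l)) (words V N))).
  intros k. destruct (swap_below_values N theta Hswap k) as [Hin Hout].
  set (l := map (theta k) (seq 0 N)).
  assert (Hlen : length l = N) by (unfold l; rewrite length_map, length_seq; reflexivity).
  apply in_map_iff. exists l. split.
  - f_equal. apply functional_extensionality. intros r. unfold extend.
    destruct (Nat.ltb_spec r N) as [Hr|Hr].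
    + unfold l. rewrite nth_indep with (d' := theta k O) by (rewrite length_map, length_seq; exact Hr).
      rewrite map_nth, seq_nth; auto.
    + symmetry; apply Hout; lia.
  - replace (words V N) with (words V (length l)) by (rewrite Hlen; reflexivity).
    apply In_words. intros x Hx.
    unfold l in Hx. apply in_map_iff in Hx. destruct Hx as [r [<- Hr]].
    apply in_seq in Hr. apply Hin; lia.
Qed.

Definition ub (D : svm_data) : R := C_ D / INR (n_ D).

Definition wvec (D : svm_data) (th : nat -> R) (c : nat) : R :=
  fsum (Ndim D) (fun r => Mmat D r c * th r).

(* f written as 1/2 |M^T theta|^2 + l^T theta, which is how Qbar = M M^T enters. *)
Definition dual_obj (D : svm_data) (th : nat -> R) : R :=
  / 2 * fsum (p_ D) (fun c => wvec D th c ^ 2) + fsum (Ndim D) (fun r => lvec D r * th r).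

Lemma grad_wvec D th r :
  grad D th r = fsum (p_ D) (fun c => Mmat D r c * wvec D th c) + lvec D r.
Proof.
  unfold grad, Qbar, wvec. f_equal.
  transitivity (fsum (Ndim D) (fun r' => fsum (p_ D) (fun c => Mmat D r c * (Mmat D r' c * th r')))).
  - apply fsum_ext; intros r' _. rewrite Rmult_comm, <- fsum_scal_l.
    apply fsum_ext; intros; ring.
  - rewrite fsum_comm. apply fsum_ext; intros. apply fsum_scal_l.
Qed.

Lemma dual_obj_update2 D th th' a b t :
  (a < Ndim D)%nat -> (b < Ndim D)%nat -> a <> b ->
  th' a = th a + t -> th' b = th b - t -> (forall r, r <> a -> r <> b -> th' r = th r) ->
  dual_obj D th' = dual_obj D th + t * (grad D th a - grad D th b)
    + t ^ 2 / 2 * fsum (p_ D) (fun c => (Mmat D a c - Mmat D b c) ^ 2).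
Proof.
  intros Ha Hb Hab Ea Eb Eo.
  assert (Hw : forall c, wvec D th' c = wvec D th c + t * (Mmat D a c - Mmat D b c)).
  { intros c. unfold wvec. rewrite (fsum_update2 _ a b (fun r => Mmat D r c * th r)); auto.
    - rewrite Ea, Eb; ring.
    - intros r Hra Hrb; rewrite Eo; auto. }
  assert (Hl : fsum (Ndim D) (fun r => lvec D r * th' r)
             = fsum (Ndim D) (fun r => lvec D r * th r) + t * (lvec D a - lvec D b)).
  { rewrite (fsum_update2 _ a b (fun r => lvec D r * th r)); auto.
    - rewrite Ea, Eb; ring.
    - intros r Hra Hrb; rewrite Eo; auto. }
  assert (Hsq : fsum (p_ D) (fun c => wvec D th' c ^ 2)
      = fsum (p_ D) (fun c => wvec D th c ^ 2)
        + 2 * t * (fsum (p_ D) (fun c => Mmat D a c * wvec D th c)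
                   - fsum (p_ D) (fun c => Mmat D b c * wvec D th c))
        + t ^ 2 * fsum (p_ D) (fun c => (Mmat D a c - Mmat D b c) ^ 2)).
  { rewrite <- fsum_sub, <- !fsum_scal_l, <- !fsum_add.
    apply fsum_ext; intros c _. rewrite Hw; ring. }
  unfold dual_obj. rewrite Hl, Hsq, !grad_wvec. field.
Qed.

Lemma Mmat_alpha D i c : (i < n_ D)%nat -> Mmat D (oA + i) c = X_ D i c.
Proof.
  intros Hi. unfold Mmat, oA. simpl.
  replace (i <? n_ D) with true by (symmetry; apply Nat.ltb_lt; exact Hi). reflexivity.
Qed.

Lemma Mmat_alpha_star D i c : (i < n_ D)%nat -> Mmat D (oAs D + i) c = - X_ D i c.
Proof.
  intros Hi. unfold Mmat, oAs.
  replace (n_ D + i <? n_ D) with false by (symmetry; apply Nat.ltb_ge; lia).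
  replace (n_ D + i <? 2 * n_ D) with true by (symmetry; apply Nat.ltb_lt; lia).
  replace (n_ D + i - n_ D)%nat with i by lia. reflexivity.
Qed.

Lemma pair_curvature D o i j :
  (o = oA \/ o = oAs D) -> (i < n_ D)%nat -> (j < n_ D)%nat ->
  fsum (p_ D) (fun c => (Mmat D (o + i) c - Mmat D (o + j) c) ^ 2)
  = Qm D i i + Qm D j j - 2 * Qm D i j.
Proof.
  intros Ho Hi Hj. unfold Qm. rewrite <- fsum_scal_l, <- fsum_add, <- fsum_sub.
  apply fsum_ext; intros c _.
  destruct Ho as [-> | ->]; [rewrite !Mmat_alpha | rewrite !Mmat_alpha_star]; auto; ring.
Qed.

Lemma pair_curvature_pos D i j :
  (i < n_ D)%nat -> (j < n_ D)%nat -> (exists c, (c < p_ D)%nat /\ X_ D i c <> X_ D j c) ->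
  0 < Qm D i i + Qm D j j - 2 * Qm D i j.
Proof.
  intros Hi Hj [c [Hc Hne]]. rewrite <- (pair_curvature D oA i j) by auto.
  apply (fsum_gt0 _ _ c); [| exact Hc |].
  - intros; apply pow2_ge_0.
  - rewrite !Mmat_alpha by auto.
    assert (X_ D i c - X_ D j c <> 0) by lra. simpl; nra.
Qed.

Lemma clamp_between lo hi t : lo <= hi -> lo <= Rmin (Rmax lo t) hi <= hi.
Proof. intros H. unfold Rmin, Rmax. repeat destruct Rle_dec; lra. Qed.

Lemma clamp_clipped lo hi t :
  lo <= 0 < t -> Rmin (Rmax lo t) hi <> t -> Rmin (Rmax lo t) hi = hi /\ hi < t.
Proof. intros H Hne. revert Hne. unfold Rmin, Rmax. repeat destruct Rle_dec; intros; lra. Qed.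

Lemma transfer_to_bound u x z :
  0 <= x < u -> 0 < z <= u ->
  let t := Rmin z (u - x) in
  0 < t /\
  ((x + t = z /\ z - t = x) \/
   ((x <> 0 /\ x <> u /\ z <> 0 /\ z <> u) /\ (z - t = 0 \/ x + t = u))).
Proof.
  intros Hx Hz t. unfold t, Rmin.
  destruct (Rle_dec z (u - x)), (Req_dec x 0), (Req_dec z u); lra.
Qed.

Definition in_box (D : svm_data) (th : nat -> R) : Prop :=
  (forall r, (r < 2 * n_ D)%nat -> 0 <= th r <= ub D) /\
  (forall s, (s < k1_ D)%nat -> 0 <= th (oG D + s)%nat).

Lemma feasible_in_box D th : feasible D th -> in_box D th.
Proof.
  intros [Hb [_ [_ Hg]]]. split; [|exact Hg].
  intros r Hr. destruct (Nat.ltb_spec r (n_ D)) as [Hrn|Hrn].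
  - exact (proj1 (Hb r Hrn)).
  - destruct (Hb (r - n_ D)%nat ltac:(lia)) as [_ H]. unfold oAs in H.
    replace (n_ D + (r - n_ D))%nat with r in H by lia. exact H.
Qed.

Lemma Iup_spec D th o i : In i (Iup D th o) -> (i < n_ D)%nat /\ th (o + i)%nat < ub D.
Proof.
  unfold Iup. intros H. apply filter_In in H as [Hseq Hlt].
  apply in_seq in Hseq. split; [lia | exact (Rltb_true _ _ Hlt)].
Qed.

Lemma Ilow_spec D th o i : In i (Ilow D th o) -> (i < n_ D)%nat /\ 0 < th (o + i)%nat.
Proof.
  unfold Ilow. intros H. apply filter_In in H as [Hseq Hlt].
  apply in_seq in Hseq. split; [lia | exact (Rltb_true _ _ Hlt)].
Qed.

Lemma pair_index_lt D o i : (o = oA \/ o = oAs D) -> (i < n_ D)%nat -> (o + i < 2 * n_ D)%nat.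
Proof. intros [-> | ->] Hi; unfold oA, oAs; lia. Qed.

Lemma pair_step_in_box D o th th' cl :
  (o = oA \/ o = oAs D) -> in_box D th -> pair_step D o th th' cl -> in_box D th'.
Proof.
  intros Ho [Hbox Hg] [i [j [Hi [_ [Hj [_ Hstep]]]]]]. cbv zeta in Hstep.
  destruct Hstep as [Ei [Ej [Eo _]]].
  apply Iup_spec in Hi as [Hi _]. apply Ilow_spec in Hj as [Hj _].
  pose proof (Hbox _ (pair_index_lt D o i Ho Hi)) as Bi.
  pose proof (Hbox _ (pair_index_lt D o j Ho Hj)) as Bj.
  change (C_ D / INR (n_ D)) with (ub D) in Ei, Ej.
  set (x := th (o + i)%nat) in *. set (z := th (o + j)%nat) in *.
  set (ts := Rmin (Rmax _ _) _) in Ei, Ej.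
  assert (Hts : Rmax (- x) (z - ub D) <= ts <= Rmin z (ub D - x)).
  { apply clamp_between. unfold Rmax, Rmin. repeat destruct Rle_dec; lra. }
  pose proof (Rmax_l (- x) (z - ub D)). pose proof (Rmax_r (- x) (z - ub D)).
  pose proof (Rmin_l z (ub D - x)). pose proof (Rmin_r z (ub D - x)).
  split.
  - intros r Hr.
    destruct (Nat.eq_dec r (o + i)) as [->|Hri]; [rewrite Ei; lra|].
    destruct (Nat.eq_dec r (o + j)) as [->|Hrj]; [rewrite Ej; lra|].
    rewrite Eo; auto.
  - intros s Hs. unfold oG. rewrite Eo by (destruct Ho as [-> | ->]; unfold oA, oAs; lia).
    exact (Hg s Hs).
Qed.

Lemma gamma_step_in_box D th th' cl : in_box D th -> gamma_step D th th' cl -> in_box D th'.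
Proof.
  intros [Hbox Hg] [u [Hu [_ Hstep]]]. cbv zeta in Hstep. destruct Hstep as [Eu [Eo _]].
  split.
  - intros r Hr. rewrite Eo by (unfold oG; lia). auto.
  - intros s Hs. destruct (Nat.eq_dec s u) as [->|Hsu].
    + rewrite Eu. apply Rmax_r.
    + rewrite Eo by (unfold oG; lia). auto.
Qed.

Lemma mu_step_in_box D th th' cl : in_box D th -> mu_step D th th' cl -> in_box D th'.
Proof.
  intros [Hbox Hg] [u [Hu [_ [_ [Eo _]]]]]. unfold oM in Eo.
  split.
  - intros r Hr. rewrite Eo by lia. auto.
  - intros s Hs. unfold oG in *. rewrite Eo by lia. auto.
Qed.

Lemma smo_step_in_box D th th' cl : in_box D th -> smo_step D th th' cl -> in_box D th'.
Proof.
  intros Hbox Hstep. unfold smo_step in Hstep. cbv zeta in Hstep.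
  destruct Hstep as [[_ H]|[[_ [_ H]]|[[_ [_ [_ H]]]|[_ [_ [_ H]]]]]].
  - exact (pair_step_in_box D oA th th' cl (or_introl eq_refl) Hbox H).
  - exact (pair_step_in_box D (oAs D) th th' cl (or_intror eq_refl) Hbox H).
  - exact (gamma_step_in_box D th th' cl Hbox H).
  - exact (mu_step_in_box D th th' cl Hbox H).
Qed.

Definition at_bound (D : svm_data) (th : nat -> R) (r : nat) : bool :=
  if Req_dec_T (th r) 0 then true else if Req_dec_T (th r) (ub D) then true else false.

Definition bound_count (D : svm_data) (th : nat -> R) : nat :=
  count_true (2 * n_ D) (at_bound D th).

Lemma at_bound_inside D th r : th r <> 0 -> th r <> ub D -> at_bound D th r = false.
Proof. intros; unfold at_bound; do 2 (destruct Req_dec_T; [congruence|]); reflexivity. Qed.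

Lemma at_bound_zero D th r : th r = 0 -> at_bound D th r = true.
Proof. intros; unfold at_bound; destruct Req_dec_T; congruence. Qed.

Lemma at_bound_ub D th r : th r = ub D -> at_bound D th r = true.
Proof. intros; unfold at_bound; do 2 (destruct Req_dec_T; try reflexivity); congruence. Qed.

Lemma at_bound_transport D th th' r r' : th' r = th r' -> at_bound D th' r = at_bound D th r'.
Proof. intros E; unfold at_bound; rewrite E; reflexivity. Qed.

Lemma bound_count_swap D th th' :
  swap_below (2 * n_ D) th th' -> bound_count D th' = bound_count D th.
Proof.
  intros [a [b [Ha [Hb [Hab [Ea [Eb Eo]]]]]]].
  pose proof (count_true_update2 (2 * n_ D) (at_bound D th) (at_bound D th') a b Ha Hb Hab
                (fun r Hra Hrb => at_bound_transport D th th' r r (Eo r Hra Hrb))) as Hcnt.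
  rewrite (at_bound_transport D th th' a b Ea), (at_bound_transport D th th' b a Eb) in Hcnt.
  unfold bound_count. lia.
Qed.

Lemma DeltaPair_pos_grad_lt D th o i j :
  0 < DeltaPair D th o ->
  (forall i', In i' (Iup D th o) -> grad D th (o + i)%nat <= grad D th (o + i')%nat) ->
  (forall j', In j' (Ilow D th o) -> grad D th (o + j')%nat <= grad D th (o + j)%nat) ->
  grad D th (o + i)%nat < grad D th (o + j)%nat.
Proof.
  intros HD Hmin Hmax. unfold DeltaPair in HD.
  destruct (lmin (map (fun i0 => grad D th (o + i0)%nat) (Iup D th o))) as [gi|] eqn:Emin; [|lra].
  destruct (lmax (map (fun j0 => grad D th (o + j0)%nat) (Ilow D th o))) as [gj|] eqn:Emax; [|lra].
  apply lmin_In, in_map_iff in Emin as [i' [<- Hi']].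
  apply lmax_In, in_map_iff in Emax as [j' [<- Hj']].
  pose proof (Hmin i' Hi'). pose proof (Hmax j' Hj').
  unfold Rmax in HD; destruct Rle_dec in HD; lra.
Qed.

Definition clipped_progress (D : svm_data) (th th' : nat -> R) : Prop :=
  (bound_count D th < bound_count D th')%nat \/
  (swap_below (2 * n_ D) th th' /\ dual_obj D th' < dual_obj D th).

Lemma pair_step_clipped_progress D o th th' :
  data_ok D -> (o = oA \/ o = oAs D) -> in_box D th ->
  0 < DeltaPair D th o -> pair_step D o th th' true -> clipped_progress D th th'.
Proof.
  intros Hdata Ho [Hbox _] HD [i [j [Hi [Hmin [Hj [Hmax Hstep]]]]]]. cbv zeta in Hstep.
  destruct Hstep as [Ei [Ej [Eo [Hclip _]]]]. specialize (Hclip eq_refl).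
  pose proof (DeltaPair_pos_grad_lt D th o i j HD Hmin Hmax) as Hgrad.
  apply Iup_spec in Hi as [Hi Hxu]. apply Ilow_spec in Hj as [Hj Hz0].
  assert (Hij : i <> j) by (intros ->; lra).
  pose proof (pair_index_lt D o i Ho Hi) as Hoi. pose proof (pair_index_lt D o j Ho Hj) as Hoj.
  assert (Hoij : (o + i <> o + j)%nat) by lia.
  pose proof (Hbox _ Hoi) as Bi. pose proof (Hbox _ Hoj) as Bj.
  destruct Hdata as [_ [_ [_ [_ [_ [_ [Hrows _]]]]]]].
  pose proof (pair_curvature_pos D i j Hi Hj (Hrows i j Hi Hj Hij)) as Hcurv.
  change (C_ D / INR (n_ D)) with (ub D) in Ei, Ej, Hclip.
  set (x := th (o + i)%nat) in *. set (z := th (o + j)%nat) in *.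
  set (ga := grad D th (o + i)%nat) in *. set (gb := grad D th (o + j)%nat) in *.
  set (curv := Qm D i i + Qm D j j - 2 * Qm D i j) in *.
  set (tq := - (ga - gb) / curv) in *.
  assert (Htq : 0 < tq) by (apply Rdiv_lt_0_compat; lra).
  assert (Etq : tq * curv = gb - ga) by (unfold tq; field; lra).
  destruct (clamp_clipped (Rmax (- x) (z - ub D)) (Rmin z (ub D - x)) tq) as [Ets Hlt];
    [split; [apply Rmax_lub|]; lra | exact Hclip |].
  rewrite Ets in Ei, Ej.
  destruct (transfer_to_bound (ub D) x z) as [Hts Hcases]; [lra | lra |].
  set (ts := Rmin z (ub D - x)) in *.
  assert (Hdecrease : dual_obj D th' < dual_obj D th).
  { rewrite (dual_obj_update2 D th th' (o + i) (o + j) ts), (pair_curvature D o i j);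
      auto; try (unfold Ndim; lia).
    fold ga gb curv. assert (0 < ts * curv) by (apply Rmult_lt_0_compat; lra). nra. }
  destruct Hcases as [[Hxz Hzx] | [[Hx0 [Hxu' [Hz0' Hzu]]] Hhit]].
  - right. split; [|exact Hdecrease].
    exists (o + i)%nat, (o + j)%nat. repeat split; auto; [rewrite Ei | rewrite Ej]; assumption.
  - left. unfold bound_count.
    pose proof (count_true_update2 (2 * n_ D) (at_bound D th) (at_bound D th') _ _ Hoi Hoj Hoij
                  (fun r Hri Hrj => at_bound_transport D th th' r r (Eo r Hri Hrj))) as Hcnt.
    rewrite (at_bound_inside D th (o + i)), (at_bound_inside D th (o + j)) in Hcnt by assumption.
    destruct Hhit as [Hhit | Hhit].
    + rewrite (at_bound_zero D th' (o + j)) in Hcnt by (rewrite Ej; exact Hhit).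
      cbn [Nat.b2n] in Hcnt. lia.
    + rewrite (at_bound_ub D th' (o + i)) in Hcnt by (rewrite Ei; exact Hhit).
      cbn [Nat.b2n] in Hcnt. lia.
Qed.

Lemma gamma_step_not_clipped D th th' :
  data_ok D -> in_box D th -> 0 < Delta3 D th -> ~ gamma_step D th th' true.
Proof.
  intros Hdata [_ Hg] HD [u [Hu [Hmin Hstep]]]. cbv zeta in Hstep.
  destruct Hstep as [_ [_ [Hclip _]]]. specialize (Hclip eq_refl).
  destruct Hdata as [_ [_ [_ [_ [_ [_ [_ [HA _]]]]]]]].
  assert (HAA : 0 < AAt D u u).
  { destruct (HA u Hu) as [c [Hc Hne]]. apply (fsum_gt0 _ _ c).
    - intros; apply Rle_0_sqr.
    - exact Hc.
    - apply Rlt_0_sqr; exact Hne. }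
  assert (Hneg : grad D th (oG D + u)%nat < 0).
  { unfold Delta3 in HD.
    destruct (lmin (map (fun s => grad D th (oG D + s)%nat) (seq 0 (k1_ D)))) as [m|] eqn:E; [|lra].
    apply lmin_In, in_map_iff in E as [s [<- Hs]]. apply in_seq in Hs.
    pose proof (Hmin s ltac:(lia)).
    unfold Rmax in HD; destruct Rle_dec in HD; lra. }
  assert (grad D th (oG D + u)%nat / AAt D u u < 0) by (apply Rdiv_neg_pos; lra).
  pose proof (Hg u Hu). lra.
Qed.

Lemma smo_step_clipped_progress D th th' :
  data_ok D -> in_box D th -> 0 < smoDelta D th -> smo_step D th th' true ->
  clipped_progress D th th'.
Proof.
  intros Hdata Hbox HD Hstep. unfold smo_step in Hstep. cbv zeta in Hstep.
  destruct Hstep as [[E H]|[[_ [E H]]|[[_ [_ [E H]]]|[_ [_ [_ H]]]]]].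
  - apply (pair_step_clipped_progress D oA); auto. unfold Delta1 in E; rewrite E; exact HD.
  - apply (pair_step_clipped_progress D (oAs D)); auto. unfold Delta2 in E; rewrite E; exact HD.
  - exfalso; apply (gamma_step_not_clipped D th th'); auto. rewrite E; exact HD.
  - destruct H as [u [_ [_ [_ [_ Hcl]]]]]. discriminate.
Qed.

Theorem lemmaD3
  (n p k1 k2 : nat) (X : nat -> nat -> R) (y : nat -> R) (C nu : R)
  (A : nat -> nat -> R) (b : nat -> R) (G : nat -> nat -> R) (d : nat -> R)
  (hdata : data_ok (Build_svm n p k1 k2 X y C nu A b G d))
  (theta : nat -> nat -> R) (cl : nat -> bool)
  (h0 : feasible (Build_svm n p k1 k2 X y C nu A b G d) (theta 0%nat))
  (hrun : forall k : nat,
     0 < smoDelta (Build_svm n p k1 k2 X y C nu A b G d) (theta k) /\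
     smo_step (Build_svm n p k1 k2 X y C nu A b G d) (theta k) (theta (S k)) (cl k)) :
  forall K : nat, exists k : nat, (K <= k)%nat /\ cl k = false.
Proof.
  set (D := Build_svm n p k1 k2 X y C nu A b G d) in *. clearbody D.
  intros K. apply NNPP; intros Hnone.
  assert (Hclipped : forall k, (K <= k)%nat -> cl k = true).
  { intros k Hk. destruct (cl k) eqn:E; [reflexivity|]. exfalso; eauto. }
  assert (Hbox : forall k, in_box D (theta k)).
  { induction k as [|k IH]; [exact (feasible_in_box D _ h0)|].
    exact (smo_step_in_box D _ _ _ IH (proj2 (hrun k))). }
  assert (Hprogress : forall k, (K <= k)%nat -> clipped_progress D (theta k) (theta (S k))).
  { intros k Hk. destruct (hrun k) as [HD Hstep]. rewrite (Hclipped k Hk) in Hstep.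
    exact (smo_step_clipped_progress D _ _ hdata (Hbox k) HD Hstep). }
  destruct (bounded_nondecreasing_stabilizes (fun k => bound_count D (theta k)) (2 * n_ D) K)
    as [K' [HK' Hstable]].
  - intros k Hk. destruct (Hprogress k Hk) as [Hlt | [Hswap _]]; [lia|].
    rewrite (bound_count_swap D _ _ Hswap). lia.
  - intros k. apply count_true_le.
  - assert (Hswaps : forall m,
        clipped_progress D (theta (K' + m)%nat) (theta (K' + S m)%nat) /\
        bound_count D (theta (K' + S m)%nat) = bound_count D (theta (K' + m)%nat)).
    { intros m. rewrite Nat.add_succ_r. split; [apply Hprogress | apply Hstable]; lia. }
    apply (swaps_not_strictly_decreasing (2 * n_ D) (dual_obj D) (fun m => theta (K' + m)%nat));
      intros m; destruct (Hswaps m) as [[Hlt | Hswap] Heq]; solve [lia | apply Hswap].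
Qed.
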